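(* Let $L,J\ge0$ and let $Q_{\ell,j}(x)$, $0\le\ell\le L$, $0\le j\le J$, be polynomials with nonnegative coefficients; set $Q_\ell(x,u)=\sum_{j=0}^JQ_{\ell,j}(x)u^j$. For an integer $m\ge0$ let $G_m(x,u)=\sum_{k\ge0}G_{m;k}(x)u^k$ be the formal power series solution of \[ G_m(x,u)=u^m+x\sum_{\ell=0}^LQ_\ell(x,u)\,\Delta^\ell G_m(x,u). \] Then for all $k\ge0$, $G_{m;k}(x)=F^{[\ge0]}_{k,m}(x)$, i.e. $G_{m;k}(x)$ is the generating function of allowed lattice paths starting at level $k$ and ending at level $m$.
   Context: $\Delta^\ell G(x,u)=\sum_{k\ge0}G_{k+\ell}(x)u^k$ for $G=\sum_kG_k(x)u^k$, $\ell\ge1$, and $\Delta^0G=G$. Step model: for each level $h\ge0$, the multiset $\mathcal S_h$ contains, for every triple $(\ell,j,r)$ with $0\le\ell\le L$, $0\le j\le\min(h,J)$, $r\ge0$, $[x^r]Q_{\ell,j}(x)\ne0$, one labelled step of displacement $(1+r,\ell-j)$ and weight $[x^r]Q_{\ell,j}(x)$. An allowed path starting at level $k$ is a finite sequence of labelled steps starting at $(0,k)$ such that each step belongs to $\mathcal S_h$, $h$ being the level of its starting point; its weight $w(p)$ is the product of its step weights (empty path: weight 1). $F^{[\ge0]}_{k,m}(x)=\sum_{n\ge0}\sum_pw(p)x^n$, summed over allowed paths from $(0,k)$ to $(n,m)$. *)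

From HB Require Import structures.
From mathcomp Require Import all_boot all_order all_algebra.
Set Implicit Arguments. Unset Strict Implicit. Unset Printing Implicit Defensive.
Import Order.TTheory GRing.Theory Num.Theory.
Local Open Scope ring_scope.

(* A bivariate formal power series in x and u over R is represented by its
   coefficient array: G k n = [u^k x^n] G. *)
Definition bser (R : Type) := nat -> nat -> R.

Definition Delta (R : Type) (l : nat) (G : bser R) : bser R :=
  fun k n => G (k + l)%N n.

Definition bmul (R : nzSemiRingType) (A B : bser R) : bser R :=
  fun k n => \sum_(i < k.+1) \sum_(a < n.+1) A i a * B (k - i)%N (n - a)%N.

Definition xmul (R : nzSemiRingType) (G : bser R) : bser R :=
  fun k n => if n is n'.+1 then G k n' else 0.

Definition umon (R : nzSemiRingType) (m : nat) : bser R :=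
  fun k n => if (k == m) && (n == 0%N) then 1 else 0.

Definition Qser (R : nzSemiRingType) (J : nat) (Q : nat -> nat -> {poly R})
  (l : nat) : bser R :=
  fun j r => if (j <= J)%N then (Q l j)`_r else 0.

Definition is_solution (R : nzSemiRingType) (L J : nat)
  (Q : nat -> nat -> {poly R}) (m : nat) (G : bser R) : Prop :=
  forall k n, G k n =
    umon R m k n
    + xmul (fun k' n' => \sum_(l < L.+1) bmul (Qser J Q l) (Delta l G) k' n') k n.

(* A labelled step (l, j, r): displacement (1 + r, l - j), weight [x^r]Q_{l,j}. *)
Definition step := (nat * nat * nat)%type.

Fixpoint allowed (R : nzSemiRingType) (L J : nat) (Q : nat -> nat -> {poly R})
  (h : nat) (p : seq step) : bool :=
  match p with
  | [::] => true
  | (l, j, r) :: p' =>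
      [&& (l <= L)%N, (j <= minn h J)%N, (Q l j)`_r != 0
        & allowed L J Q (h + l - j)%N p']
  end.

Fixpoint endlevel (h : nat) (p : seq step) : nat :=
  match p with
  | [::] => h
  | (l, j, r) :: p' => endlevel (h + l - j)%N p'
  end.

Definition xlen (p : seq step) : nat := sumn [seq (1 + s.2)%N | s <- p].

Definition pweight (R : nzSemiRingType) (Q : nat -> nat -> {poly R})
  (p : seq step) : R :=
  \prod_(s <- p) (Q s.1.1 s.1.2)`_s.2.

(* [x^n] F^{[>=0]}_{k,m}(x): sum of weights of allowed paths from (0,k) to
   (n,m).  Such a path has at most n steps, and each step (l,j,r) has
   l <= L, j <= J, r < n, so enumerating all tuples of length s <= n with
   entries in 'I_(L+1) * 'I_(J+1) * 'I_n lists every such path exactly once. *)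
Definition Fcoef (R : nzSemiRingType) (L J : nat) (Q : nat -> nat -> {poly R})
  (k m n : nat) : R :=
  \sum_(s < n.+1) \sum_(t : s.-tuple ('I_L.+1 * 'I_J.+1 * 'I_n))
    let p := [seq ((val x.1.1, val x.1.2, val x.2) : step) | x <- t] in
    if allowed L J Q k p && (endlevel k p == m) && (xlen p == n)
    then pweight Q p else 0.

From HB Require Import structures.
From mathcomp Require Import all_boot all_order all_algebra.
From mathcomp Require Import zify.
Import Order.TTheory GRing.Theory Num.Theory.
Local Open Scope ring_scope.

(* Write the equation as G = u^m + T G with T G := x * sum_l Q_l Delta^l G.
   Since T raises the x-degree, the solution is unique and equals
   sum_s T^s u^m, the coefficient [x^n] involving only s <= n.  Splitting off
   the first step of a path shows that T^s u^m is the generating function of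
   allowed paths with exactly s steps.  Nonnegativity of the coefficients is
   never used: the identity holds over any semiring. *)

Lemma big_tuple_cons {R : nzSemiRingType} {T : finType} {s : nat}
    (F : seq T -> R) :
  \sum_(t : s.+1.-tuple T) F t = \sum_(x : T) \sum_(t : s.-tuple T) F (x :: t).
Proof.
rewrite pair_big /=.
rewrite (reindex (fun p : T * s.-tuple T => [tuple of p.1 :: p.2])) //=.
exists (fun t : s.+1.-tuple T => (thead t, [tuple of behead t])).
  by move=> [x t] _ /=; congr (_, _); apply: val_inj.
by move=> t _; rewrite [RHS]tuple_eta.
Qed.

Lemma big_ord_shrink {R : nzSemiRingType} (F : nat -> R) {M N : nat} :
  (M <= N)%N ->
  (forall i, (M <= i < N)%N -> F i = 0) ->
  \sum_(i < N) F i = \sum_(i < M) F i.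
Proof.
move=> leMN F0; rewrite (big_ord_widen N F leMN) [RHS]big_mkcond.
apply: eq_bigr => i _; case: ltnP => // leMi.
by rewrite F0 // leMi ltn_ord.
Qed.

Lemma big_prod3 {R : nzSemiRingType} {I1 I2 I3 : finType}
    (F : I1 -> I2 -> I3 -> R) :
  \sum_(x : I1 * I2 * I3) F x.1.1 x.1.2 x.2 = \sum_a \sum_b \sum_c F a b c.
Proof. by rewrite !pair_bigA. Qed.

Section PathSeries.
Context {R : nzSemiRingType} (L J : nat) (Q : nat -> nat -> {poly R}) (m : nat).

Definition step_op (G : bser R) : bser R :=
  xmul (fun k n => \sum_(l < L.+1) bmul (Qser J Q l) (Delta l G) k n).

Lemma is_solutionE G :
  is_solution L J Q m G <-> forall k n, G k n = umon R m k n + step_op G k n.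
Proof. by []. Qed.

Lemma eq_step_op G1 G2 k n :
  (forall k' n', (n' < n)%N -> G1 k' n' = G2 k' n') ->
  step_op G1 k n = step_op G2 k n.
Proof.
case: n => [|n] // eqG; apply: eq_bigr => l _.
apply: eq_bigr => i _; apply: eq_bigr => a _.
by rewrite /Delta eqG // ltnS leq_subr.
Qed.

Lemma step_op_sum N (F : nat -> bser R) k n :
  step_op (fun k' n' => \sum_(i < N) F i k' n') k n
  = \sum_(i < N) step_op (F i) k n.
Proof.
rewrite /step_op /xmul; case: n => [|n]; first by rewrite big1.
rewrite [RHS]exchange_big; apply: eq_bigr => l _.
rewrite /bmul [RHS]exchange_big; apply: eq_bigr => i _.
by rewrite [RHS]exchange_big; apply: eq_bigr => a _; rewrite mulr_sumr.
Qed.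

Lemma iter_step_op_small s k n : (n < s)%N -> iter s step_op (umon R m) k n = 0.
Proof.
elim: s k n => [|s IH] k [|n] //= ltns.
apply: big1 => l _; apply: big1 => i _; apply: big1 => a _.
by rewrite /Delta IH ?mulr0 //; lia.
Qed.

Definition path_series : bser R :=
  fun k n => \sum_(s < n.+1) iter s step_op (umon R m) k n.

Lemma path_seriesE N k n : (n < N)%N ->
  path_series k n = \sum_(s < N) iter s step_op (umon R m) k n.
Proof.
move=> ltnN.
rewrite [RHS](big_ord_shrink (fun s => iter s step_op _ k n) ltnN) // => s.
by case/andP=> lts _; rewrite iter_step_op_small.
Qed.

Lemma path_series_solution : is_solution L J Q m path_series.
Proof.
apply/is_solutionE => k [|n]; first by rewrite /path_series big_ord1 addr0.
rewrite [LHS]/path_series big_ord_recl; congr (_ + _).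
transitivity
  (step_op (fun k' n' => \sum_(s < n.+1) iter s step_op (umon R m) k' n')
     k n.+1).
  by rewrite step_op_sum.
by apply: eq_step_op => k' n' ltn'n; rewrite (path_seriesE _ _ _ ltn'n).
Qed.

Lemma solution_unique G1 G2 :
  is_solution L J Q m G1 -> is_solution L J Q m G2 -> G1 =2 G2.
Proof.
move=> /is_solutionE sol1 /is_solutionE sol2 k n.
elim/ltn_ind: n k => n IH k; rewrite sol1 sol2; congr (_ + _).
by apply: eq_step_op => k' n' /IH.
Qed.

Lemma step_op_first_steps G B k n : (n <= B)%N ->
  \sum_(l < L.+1) \sum_(j < J.+1) \sum_(r < B)
     (if (j <= k)%N && (r < n)%N
      then Qser J Q l j r * G (k + l - j)%N (n - r.+1)%N else 0)
  = step_op G k n.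
Proof.
(* Both sides sum over first steps (l, j, r) with j <= minn k J and r < n. *)
case: n => [|n] lenB.
  by rewrite big1 // => l _; rewrite big1 // => j _; rewrite big1 // => r _;
     rewrite andbF.
apply: eq_bigr => l _.
pose term j r := if (j <= k)%N && (r < n.+1)%N
  then Qser J Q l j r * G (k + l - j)%N (n.+1 - r.+1)%N else 0.
have shrink_r j : \sum_(r < B) term j r = \sum_(r < n.+1) term j r.
  rewrite (big_ord_shrink _ lenB) // => r /andP[ltnr _].
  by rewrite /term (leq_gtF ltnr) andbF.
rewrite -/term; under eq_bigr => j _ do rewrite shrink_r.
rewrite (big_ord_shrink (fun j => \sum_(r < n.+1) term j r)
  (geq_minr k J : minn k J < J.+1)%N); last first.
  move=> j /andP[ltj ltjJ] /=; apply: big1 => r _.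
  by rewrite /term (_ : (j <= k)%N = false) //; lia.
rewrite /bmul /Delta (big_ord_shrink (fun i => \sum_(a < n.+1) Qser J Q l i a *
  G (k - i + l)%N (n - a)%N) (geq_minl k J : minn k J < k.+1)%N); last first.
  move=> i /andP[lti ltik] /=; apply: big1 => a _.
  by rewrite /Qser (_ : (i <= J)%N = false) ?mul0r //; lia.
apply: eq_bigr => j _; apply: eq_bigr => r _.
have lejk : (j <= k)%N by have := ltn_ord j; lia.
by rewrite /term lejk ltn_ord (_ : (k + l - j = k - j + l)%N) //; lia.
Qed.

Definition path_weight k n (p : seq step) : R :=
  if allowed L J Q k p && (endlevel k p == m) && (xlen p == n)
  then pweight Q p else 0.

Lemma path_weight_nil k n : path_weight k n [::] = umon R m k n.
Proof. by rewrite /path_weight /pweight big_nil /umon [(0 == n)%N]eq_sym. Qed.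

Lemma path_weight_cons k n l j r p : (l <= L)%N ->
  path_weight k n ((l, j, r) :: p) =
  if (j <= k)%N && (r < n)%N
  then Qser J Q l j r * path_weight (k + l - j)%N (n - r.+1)%N p else 0.
Proof.
move=> leL; rewrite /path_weight /Qser /= leL leq_min.
case: eqVneq => [Qr0|_] /=.
  by rewrite Qr0 andbF; case: ifP => //; case: ifP; rewrite mul0r.
case: (j <= k)%N; case: (j <= J)%N; rewrite /= ?mul0r ?if_same //.
rewrite -[xlen _]/(r.+1 + xlen p)%N.
case: (ltnP r n) => [ltrn|lenr]; last first.
  have /negPf -> : (r.+1 + xlen p != n)%N by lia.
  by rewrite andbF.
have -> : (r.+1 + xlen p == n)%N = (xlen p == n - r.+1)%N.
  by apply/eqP/eqP; lia.
by rewrite /pweight big_cons; case: ifP; rewrite ?mulr0.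
Qed.

Definition step_of {B} (x : 'I_L.+1 * 'I_J.+1 * 'I_B) : step :=
  (val x.1.1, val x.1.2, val x.2).

Lemma sum_path_weight_tuple B s k n : (n <= B)%N ->
  \sum_(t : s.-tuple ('I_L.+1 * 'I_J.+1 * 'I_B))
     path_weight k n [seq step_of x | x <- t]
  = iter s step_op (umon R m) k n.
Proof.
elim: s k n => [|s IH] k n lenB.
  rewrite (big_pred1 [tuple]) ?path_weight_nil // => t.
  by rewrite [t]tuple0; apply/esym/eqP.
rewrite (big_tuple_cons (fun t => path_weight k n [seq step_of x | x <- t])).
rewrite iterS -(step_op_first_steps _ _ _ _ lenB) -big_prod3.
apply: eq_bigr => x _ /=.
have leL : (x.1.1 <= L)%N := ltn_ord x.1.1.
rewrite (eq_bigr _ (fun t _ => path_weight_cons _ _ _ _ _ _ leL)).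
case: ifP => [/andP[_ ltrn]|_]; last by rewrite big1.
by rewrite -mulr_sumr IH //; lia.
Qed.

Lemma Fcoef_path_series k n : Fcoef L J Q k m n = path_series k n.
Proof.
by apply: eq_bigr => s _; rewrite -(sum_path_weight_tuple _ _ _ _ (leqnn n)).
Qed.

End PathSeries.

Theorem lemma4 (R : realDomainType) (L J : nat) (Q : nat -> nat -> {poly R})
  (HQ : forall l j i, (l <= L)%N -> (j <= J)%N -> 0 <= (Q l j)`_i)
  (m : nat) :
  (exists G : bser R, is_solution L J Q m G) /\
  (forall G : bser R, is_solution L J Q m G ->
     forall k n, G k n = Fcoef L J Q k m n).
Proof.
have solF := path_series_solution L J Q m.
split; first by exists (path_series L J Q m).
by move=> G solG k n; rewrite Fcoef_path_series; apply: solution_unique.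
Qed.
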